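(* Let $\mathbf{V}\in\mathbb{R}^{N\times N}$ with $\mathbf{V}\boldsymbol\mu=\boldsymbol\mu$ and $\mathbf{A}\in\mathbb{R}^{T\times N}$ with $\mathbf{1}_T^\top\mathbf{A}=\mathbf{1}_N^\top$. Then $$\mathbb{E}\nabla_{\mathbf{V}}l=\|\mathbf{A}\|_\mu^2\mathbf{V}\operatorname{diag}(\boldsymbol\mu)+(1-\|\mathbf{A}\|_\mu^2)\boldsymbol\mu\boldsymbol\mu^\top-\langle\mathbf{Q},\mathbf{A}\rangle_\mu\mathbf{P}\operatorname{diag}(\boldsymbol\mu)-(1-\langle\mathbf{Q},\mathbf{A}\rangle_\mu)\boldsymbol\mu\boldsymbol\mu^\top,$$ and for every $k\in[N]$, $$\mathbb{E}\nabla_{\mathbf{a}^{(k)}}l=\mu_k(\|\mathbf{V}\|_\mu^2-\|\boldsymbol\mu\|^2)\mathbf{a}^{(k)}+\mu_k\|\boldsymbol\mu\|^2\mathbf{1}-\mu_k\langle\mathbf{V},\mathbf{P}\rangle_\mu\mathbf{q}^{(k)}-\mu_k\|\boldsymbol\mu\|^2(\mathbf{1}-\mathbf{q}^{(k)}).$$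
   Context: Let $\mathbf{P}\in\mathbb{R}^{N\times N}$ have nonnegative entries with columns summing to $1$, and let $\boldsymbol\mu\in\mathbb{R}^N$ be a probability vector with $\mathbf{P}\boldsymbol\mu=\boldsymbol\mu$. Let $\mathbf{Q}=(\mathbf{q}^{(1)},\dots,\mathbf{q}^{(N)})\in\mathbb{R}^{T\times N}$ with each $\mathbf{q}^{(k)}$ a probability vector. Data: $x_1,\dots,x_{T+1}$ i.i.d. with law $\boldsymbol\mu$ on $[N]$, and $x_o\in[N]$ with $\Pr(x_o=n\mid x_{T+1}=k,x_1,\dots,x_T)=\sum_tq^{(k)}_tP_{n,x_t}$; $\mathbf{X}=(\mathbf{e}_{x_1},\dots,\mathbf{e}_{x_T})\in\mathbb{R}^{N\times T}$. The loss is $l=\frac12\|\mathbf{e}_{x_o}-\mathbf{V}\mathbf{X}\mathbf{A}\mathbf{e}_{x_{T+1}}\|^2$, with $\mathbf{a}^{(k)}$ the $k$-th column of $\mathbf{A}$; $\nabla_{\mathbf{V}}l$ and $\nabla_{\mathbf{a}^{(k)}}l$ are its gradients, and $\mathbb{E}$ is expectation over $(x_1,\dots,x_{T+1},x_o)$ with $\mathbf{V},\mathbf{A}$ fixed. For matrices $\mathbf{M},\mathbf{M}'$ with $N$ columns, $\langle\mathbf{M},\mathbf{M}'\rangle_\mu=\operatorname{Tr}(\mathbf{M}\operatorname{diag}(\boldsymbol\mu)\mathbf{M}'^\top)$ and $\|\mathbf{M}\|_\mu^2=\langle\mathbf{M},\mathbf{M}\rangle_\mu$; $\|\boldsymbol\mu\|$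 is Euclidean; $\mathbf{1}$ is the all-ones vector in $\mathbb{R}^T$. *)

From HB Require Import structures.
From mathcomp Require Import all_boot all_order all_algebra.
From mathcomp Require Import all_classical all_reals all_analysis.
Set Implicit Arguments. Unset Strict Implicit. Unset Printing Implicit Defensive.
Import Order.TTheory GRing.Theory Num.Theory.
Local Open Scope ring_scope.

Section Defs.
Variables (R : realType) (N T : nat).

Definition Xmat (x : {ffun 'I_T -> 'I_N}) : 'M[R]_(N, T) :=
  \matrix_(n < N, t < T) (x t == n)%:R.

Definition evec (n : 'I_N) : 'cV[R]_N := \col_(i < N) (i == n)%:R.

(* loss l = 1/2 || e_{x_o} - V X A e_{x_{T+1}} ||^2, with x_{T+1} = k *)
Definition loss (V : 'M[R]_N) (A : 'M[R]_(T, N))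
    (x : {ffun 'I_T -> 'I_N}) (k o : 'I_N) : R :=
  2^-1 * \sum_(n < N) ((evec o - V *m Xmat x *m col k A) n 0) ^+ 2.

Definition gradV (V : 'M[R]_N) (A : 'M[R]_(T, N))
    (x : {ffun 'I_T -> 'I_N}) (k o : 'I_N) : 'M[R]_N :=
  \matrix_(i < N, j < N)
     derive1 (fun s : R => loss (V + s *: delta_mx i j) A x k o) 0.

Definition gradA (V : 'M[R]_N) (A : 'M[R]_(T, N)) (c : 'I_N)
    (x : {ffun 'I_T -> 'I_N}) (k o : 'I_N) : 'cV[R]_T :=
  \col_(t < T)
     derive1 (fun s : R => loss V (A + s *: delta_mx t c) x k o) 0.

(* joint probability of (x_1..x_T, x_{T+1} = k, x_o = o) *)
Definition jointw (mu : 'cV[R]_N) (P : 'M[R]_N) (Q : 'M[R]_(T, N))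
    (x : {ffun 'I_T -> 'I_N}) (k o : 'I_N) : R :=
  (\prod_(t < T) mu (x t) 0) * mu k 0 * (\sum_(t < T) Q t k * P o (x t)).

Definition Expect (m n : nat) (mu : 'cV[R]_N) (P : 'M[R]_N) (Q : 'M[R]_(T, N))
    (f : {ffun 'I_T -> 'I_N} -> 'I_N -> 'I_N -> 'M[R]_(m, n)) : 'M[R]_(m, n) :=
  \sum_(x : {ffun 'I_T -> 'I_N}) \sum_(k < N) \sum_(o < N)
     jointw mu P Q x k o *: f x k o.

Definition ipmu (m : nat) (mu : 'cV[R]_N) (M M' : 'M[R]_(m, N)) : R :=
  \tr (M *m diag_mx mu^T *m M'^T).

Definition sqnorm (mu : 'cV[R]_N) : R := \sum_(i < N) mu i 0 ^+ 2.

End Defs.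

From HB Require Import structures.
From mathcomp Require Import all_boot all_order all_algebra.
From mathcomp Require Import all_classical all_reals all_analysis.
From mathcomp Require Import ring.
Import Order.TTheory GRing.Theory Num.Theory.
Local Open Scope ring_scope.
Set Implicit Arguments.
Unset Strict Implicit.

(** Along a coordinate direction the loss is a quadratic polynomial in the
  step size, so each partial derivative is its linear coefficient, and the
  output token x_o enters it only through e_{x_o}.  Summing out x_o thus only
  uses that the columns of P and Q are probability vectors.  As x_1, ..., x_T
  are i.i.d. with law mu, E[f(x_t) g(x_s)] is E_mu[f g] for t = s and
  E_mu[f] E_mu[g] otherwise, whence
  E[(sum_t a_t f(x_t)) (sum_s b_s g(x_s))]
    = (sum_t a_t b_t) Cov_mu(f, g) + (sum_t a_t) (sum_s b_s) E_mu[f] E_mu[g].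
  The normalisations 1^T A = 1^T, 1^T Q = 1^T, V mu = mu and P mu = mu turn
  these means and covariances into the stated closed forms. *)

Section BigDelta.
Variables (R : comNzRingType) (I : finType).

Lemma sum_mul_delta (h : I -> R) (i : I) : \sum_j h j * (j == i)%:R = h i.
Proof.
under eq_bigr => j _ do rewrite mulr_natr mulrb.
by rewrite -big_mkcond big_pred1_eq.
Qed.

Lemma prod_if_eq (h : I -> R) (i : I) : \prod_j (if j == i then h j else 1) = h i.
Proof. by rewrite -big_mkcond big_pred1_eq. Qed.

End BigDelta.

Section Derivative.
Variable R : realType.

Lemma derive1_quadratic (a b c : R) :
  derive1 (fun s : R => a + s * b + s ^+ 2 * c) 0 = b.
Proof.
have -> : (fun s : R => a + s * b + s ^+ 2 * c)
    = horner (a%:P + b *: 'X + c *: 'X^2).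
  by apply: funext => s; rewrite !hornerD !hornerZ hornerX hornerXn hornerC; ring.
by rewrite -derivE !derivD !derivZ derivX derivXn derivC !hornerE.
Qed.

Lemma derive1_half_sum_sq (I : finType) (r d : I -> R) :
  derive1 (fun s : R => 2^-1 * \sum_i (r i - s * d i) ^+ 2) 0
  = - \sum_i r i * d i.
Proof.
have -> : (fun s : R => 2^-1 * \sum_i (r i - s * d i) ^+ 2)
    = (fun s => 2^-1 * \sum_i r i ^+ 2 + s * (- \sum_i r i * d i)
                + s ^+ 2 * (2^-1 * \sum_i d i ^+ 2)).
  apply: funext => s; rewrite !mulr_sumr -sumrN !mulr_sumr -!big_split /=.
  by apply: eq_bigr => i _; field.
exact: derive1_quadratic.
Qed.

End Derivative.

Section Gradients.
Variables (R : realType) (N T : nat).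
Implicit Types (V : 'M[R]_N) (A : 'M[R]_(T, N)) (x : {ffun 'I_T -> 'I_N}).

Lemma derive1_half_sqdist_evec (o : 'I_N) (y : R -> 'cV[R]_N) (p q : 'I_N -> R) :
  (forall s n, y s n 0 = p n + s * q n) ->
  derive1 (fun s => 2^-1 * \sum_n ((evec R o - y s) n 0) ^+ 2) 0
  = \sum_n (p n - (n == o)%:R) * q n.
Proof.
move=> yE.
have -> : (fun s => 2^-1 * \sum_n ((evec R o - y s) n 0) ^+ 2)
    = (fun s => 2^-1 * \sum_n (((n == o)%:R - p n) - s * q n) ^+ 2).
  by apply: funext => s; congr (_ * _); apply: eq_bigr => n _; rewrite !mxE yE opprD addrA.
rewrite derive1_half_sum_sq -sumrN; apply: eq_bigr => n _; ring.
Qed.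

Lemma mulmx_Xmat_colE V A x (k n : 'I_N) :
  (V *m Xmat R x *m col k A) n 0 = \sum_t A t k * V n (x t).
Proof.
rewrite -mulmxA mxE.
under eq_bigr => m _ do rewrite mxE mulr_sumr.
rewrite exchange_big /=; apply: eq_bigr => t _.
under eq_bigr => m _ do rewrite !mxE mulrCA mulrC eq_sym.
by rewrite sum_mul_delta mulrC.
Qed.

Lemma gradVE V A x (k o i j : 'I_N) :
  gradV V A x k o i j = (\sum_t A t k * V i (x t) - (i == o)%:R)
                         * \sum_t A t k * (x t == j)%:R.
Proof.
rewrite mxE /loss (@derive1_half_sqdist_evec _ _ (fun n => \sum_t A t k * V n (x t))
  (fun n => (\sum_t A t k * (x t == j)%:R) * (n == i)%:R)).
  by under eq_bigr => n _ do rewrite mulrA; rewrite sum_mul_delta.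
move=> s n; rewrite mulmx_Xmat_colE mulrA mulr_sumr mulr_suml -big_split /=.
apply: eq_bigr => t _; rewrite !mxE.
by case: (n == i); case: (x t == j); rewrite /=; ring.
Qed.

Lemma gradAE V A (c : 'I_N) x (k o : 'I_N) (t : 'I_T) :
  gradA V A c x k o t 0 = (k == c)%:R *
     (\sum_n (\sum_s A s k * V n (x s)) * V n (x t) - V o (x t)).
Proof.
rewrite mxE /loss (@derive1_half_sqdist_evec _ _ (fun n => \sum_s A s k * V n (x s))
  (fun n => (k == c)%:R * V n (x t))).
  under eq_bigr => n _ do rewrite mulrBl.
  rewrite sumrB; under [X in _ - X]eq_bigr => n _ do rewrite mulrC.
  rewrite sum_mul_delta mulrBr mulr_sumr; congr (_ - _).
  by apply: eq_bigr => n _; ring.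
move=> s n; rewrite mulmx_Xmat_colE.
under eq_bigr => u _ do rewrite !mxE mulrDl.
rewrite big_split /=; congr (_ + _).
transitivity (\sum_u (s * (k == c)%:R * V n (x u)) * (u == t)%:R).
  by apply: eq_bigr => u _; rewrite -mulnb natrM; ring.
by rewrite sum_mul_delta mulrA.
Qed.

End Gradients.

Section ProductMeasure.
Variables (R : realType) (N T : nat) (mu : 'cV[R]_N).
Hypothesis mu_sum1 : \sum_n mu n 0 = 1.

Definition prodw (x : {ffun 'I_T -> 'I_N}) : R := \prod_t mu (x t) 0.

Definition mean (f : 'I_N -> R) : R := \sum_n mu n 0 * f n.

Definition cov (f g : 'I_N -> R) : R := mean (fun n => f n * g n) - mean f * mean g.

Lemma mean1 : mean (fun=> 1) = 1.
Proof. by rewrite /mean; under eq_bigr do rewrite mulr1. Qed.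

Lemma expect_prod (F : 'I_T -> 'I_N -> R) :
  \sum_x prodw x * \prod_t F t (x t) = \prod_t mean (F t).
Proof.
by rewrite /mean bigA_distr_bigA /=; apply: eq_bigr => x _; rewrite -big_split.
Qed.

Lemma expect_pair (t s : 'I_T) (f g : 'I_N -> R) :
  \sum_x prodw x * (f (x t) * g (x s))
  = if t == s then mean (fun n => f n * g n) else mean f * mean g.
Proof.
pose F u n := (if u == t then f n else 1) * (if u == s then g n else 1).
transitivity (\sum_x prodw x * \prod_u F u (x u)).
  apply: eq_bigr => x _; rewrite big_split /=.
  by rewrite (prod_if_eq (fun u => f (x u))) (prod_if_eq (fun u => g (x u))).
rewrite expect_prod /F; case: eqP => [<- | /eqP ts].
  rewrite -(prod_if_eq (fun=> mean (fun n => f n * g n)) t).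
  apply: eq_bigr => u _; case: (u == t) => //.
  by rewrite mulr1 mean1.
rewrite -(prod_if_eq (fun=> mean f) t) -(prod_if_eq (fun=> mean g) s) -big_split /=.
apply: eq_bigr => u _.
have [->|ut] := eqVneq u t.
  rewrite (negPf ts) mulr1.
  by congr mean; apply: funext => n; rewrite mulr1.
rewrite mul1r; case: (u == s); last by rewrite mulr1 mean1.
by congr mean; apply: funext => n; rewrite mul1r.
Qed.

Lemma expect_bilinear (al be : 'I_T -> R) (f g : 'I_N -> R) :
  \sum_x prodw x * ((\sum_t al t * f (x t)) * (\sum_s be s * g (x s)))
  = (\sum_t al t * be t) * cov f g
    + (\sum_t al t) * (\sum_s be s) * (mean f * mean g).
Proof.
have pairE (t s : 'I_T) : (if t == s then mean (fun n => f n * g n) else mean f * mean g)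
    = cov f g * (s == t)%:R + mean f * mean g.
  by rewrite /cov eq_sym; case: (s == t); rewrite /= ?mulr1 ?mulr0 ?add0r ?subrK.
transitivity (\sum_t \sum_s al t * be s * \sum_x prodw x * (f (x t) * g (x s))).
  under [RHS]eq_bigr => t _ do under eq_bigr => s _ do rewrite mulr_sumr.
  under [RHS]eq_bigr => t _ do rewrite exchange_big.
  rewrite [RHS]exchange_big; apply: eq_bigr => x _ /=.
  rewrite mulr_suml mulr_sumr; apply: eq_bigr => t _.
  rewrite !mulr_sumr; apply: eq_bigr => s _; ring.
under eq_bigr => t _ do
  (under eq_bigr => s _ do rewrite expect_pair pairE mulrDr mulrA;
   rewrite big_split sum_mul_delta /=).
set M := mean f * mean g.
rewrite big_split /=; congr (_ + _); first by rewrite mulr_suml.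
rewrite -mulrA mulr_suml; apply: eq_bigr => t _.
rewrite mulr_suml mulr_sumr; apply: eq_bigr => s _; ring.
Qed.

Lemma expect_sum_mul (al : 'I_T -> R) (f g : 'I_N -> R) (t : 'I_T) :
  \sum_x prodw x * ((\sum_s al s * f (x s)) * g (x t))
  = al t * cov f g + (\sum_s al s) * (mean f * mean g).
Proof.
have sum_delta : \sum_s (s == t)%:R = 1 :> R.
  by rewrite -[RHS](sum_mul_delta (fun=> 1) t); under [RHS]eq_bigr do rewrite mul1r.
have := expect_bilinear al (fun s => (s == t)%:R) f g.
rewrite sum_mul_delta sum_delta mulr1 => <-; apply: eq_bigr => x _.
congr (_ * (_ * _)); rewrite -(sum_mul_delta (fun s => g (x s)) t).
by apply: eq_bigr => s _; rewrite mulrC.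
Qed.

End ProductMeasure.

Section MuMoments.
Variables (R : realType) (N : nat) (mu : 'cV[R]_N).

Lemma mean_row_fixed (M : 'M[R]_N) (i : 'I_N) :
  M *m mu = mu -> mean mu (fun n => M i n) = mu i 0.
Proof.
move=> /(congr1 (fun v : 'cV[R]_N => v i 0)); rewrite /= mxE => <-.
by apply: eq_bigr => n _; rewrite mulrC.
Qed.

Lemma mean_delta (h : 'I_N -> R) (j : 'I_N) :
  mean mu (fun n => h n * (n == j)%:R) = mu j 0 * h j.
Proof.
by rewrite /mean; under eq_bigr => n _ do rewrite mulrA; rewrite sum_mul_delta.
Qed.

Lemma cov_delta (h : 'I_N -> R) (j : 'I_N) :
  cov mu h (fun n => (n == j)%:R) = mu j 0 * h j - mean mu h * mu j 0.
Proof.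
rewrite /cov mean_delta; congr (_ - _ * _).
by rewrite -[RHS]mulr1 -(mean_delta (fun=> 1)); congr mean; apply: funext => n; rewrite mul1r.
Qed.

Lemma ipmuE (m : nat) (M M' : 'M[R]_(m, N)) :
  ipmu mu M M' = \sum_k mu k 0 * \sum_t M t k * M' t k.
Proof.
rewrite /ipmu /mxtrace mul_mx_diag.
under eq_bigr => t _ do rewrite mxE; rewrite exchange_big /=.
apply: eq_bigr => k _; rewrite mulr_sumr; apply: eq_bigr => t _.
by rewrite !mxE; ring.
Qed.

Lemma ipmu_meanE (m : nat) (M M' : 'M[R]_(m, N)) :
  ipmu mu M M' = \sum_t mean mu (fun k => M t k * M' t k).
Proof.
rewrite ipmuE exchange_big /=; apply: eq_bigr => t _.
by rewrite mulr_sumr.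
Qed.

Lemma ipmuC (m : nat) (M M' : 'M[R]_(m, N)) : ipmu mu M M' = ipmu mu M' M.
Proof.
by rewrite !ipmuE; apply: eq_bigr => k _; under eq_bigr do rewrite mulrC.
Qed.

Lemma sum_cov_rows (M M' : 'M[R]_N) :
  M *m mu = mu -> M' *m mu = mu ->
  \sum_n cov mu (fun m => M n m) (fun m => M' n m) = ipmu mu M M' - sqnorm mu.
Proof.
move=> Mmu M'mu; rewrite /cov sumrB ipmu_meanE; congr (_ - _).
by apply: eq_bigr => n _; rewrite (mean_row_fixed _ Mmu) (mean_row_fixed _ M'mu) expr2.
Qed.

End MuMoments.

Lemma ExpectE (R : realType) (N T m n : nat) (mu : 'cV[R]_N) (P : 'M[R]_N)
    (Q : 'M[R]_(T, N)) (f : {ffun 'I_T -> 'I_N} -> 'I_N -> 'I_N -> 'M[R]_(m, n))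
    (i : 'I_m) (j : 'I_n) :
  Expect mu P Q f i j
  = \sum_x \sum_k \sum_o jointw mu P Q x k o * f x k o i j.
Proof.
rewrite summxE; apply: eq_bigr => x _; rewrite summxE; apply: eq_bigr => k _.
by rewrite summxE; apply: eq_bigr => o _; rewrite mxE.
Qed.

Section ExpectedGradients.
Variables (R : realType) (N T : nat)
  (P : 'M[R]_N) (mu : 'cV[R]_N) (Q : 'M[R]_(T, N))
  (V : 'M[R]_N) (A : 'M[R]_(T, N)).
Hypotheses (P_sum1 : forall j, \sum_i P i j = 1)
  (mu_sum1 : \sum_i mu i 0 = 1)
  (P_mu : P *m mu = mu)
  (Q_sum1 : forall k, \sum_t Q t k = 1)
  (V_mu : V *m mu = mu)
  (A_sum1 : forall k, \sum_t A t k = 1).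

Lemma sum_emission (x : {ffun 'I_T -> 'I_N}) (k : 'I_N) :
  \sum_o \sum_t Q t k * P o (x t) = 1.
Proof.
rewrite exchange_big /= -(Q_sum1 k); apply: eq_bigr => t _.
by rewrite -mulr_sumr P_sum1 mulr1.
Qed.

Lemma sum_out_gradV x (k i j : 'I_N) :
  \sum_o jointw mu P Q x k o * gradV V A x k o i j
  = mu k 0 * (prodw mu x * ((\sum_t A t k * V i (x t)) * \sum_t A t k * (x t == j)%:R)
     - prodw mu x * ((\sum_t Q t k * P i (x t)) * \sum_t A t k * (x t == j)%:R)).
Proof.
under eq_bigr => o _ do rewrite gradVE /jointw.
set Sv := \sum_t A t k * V i (x t).
set H := \sum_t A t k * (x t == j)%:R.
transitivity (\sum_o (prodw mu x * mu k 0 * H * Sv) * (\sum_t Q t k * P o (x t))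
   - \sum_o (prodw mu x * mu k 0 * H) * ((\sum_t Q t k * P o (x t)) * (o == i)%:R)).
  by rewrite -sumrB; apply: eq_bigr => o _; rewrite /prodw eq_sym; ring.
by rewrite -!mulr_sumr sum_emission sum_mul_delta; ring.
Qed.

Lemma sum_out_gradA x (k c : 'I_N) (t : 'I_T) :
  \sum_o jointw mu P Q x k o * gradA V A c x k o t 0
  = (mu k 0 * (prodw mu x * (\sum_n (\sum_s A s k * V n (x s)) * V n (x t))
     - \sum_o prodw mu x * ((\sum_s Q s k * P o (x s)) * V o (x t))))
    * (k == c)%:R.
Proof.
under eq_bigr => o _ do rewrite gradAE /jointw.
set S := \sum_n (\sum_s A s k * V n (x s)) * V n (x t).
transitivity (\sum_o (prodw mu x * mu k 0 * (k == c)%:R * S) * (\sum_s Q s k * P o (x s))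
   - \sum_o (mu k 0 * (k == c)%:R)
        * (prodw mu x * ((\sum_s Q s k * P o (x s)) * V o (x t)))).
  by rewrite -sumrB; apply: eq_bigr => o _; rewrite /prodw; ring.
by rewrite -!mulr_sumr sum_emission; ring.
Qed.

Lemma expected_gradV :
  Expect mu P Q (fun x k o => gradV V A x k o)
    = ipmu mu A A *: (V *m diag_mx mu^T)
      + (1 - ipmu mu A A) *: (mu *m mu^T)
      - ipmu mu Q A *: (P *m diag_mx mu^T)
      - (1 - ipmu mu Q A) *: (mu *m mu^T).
Proof.
apply/matrixP => i j; rewrite ExpectE.
under eq_bigr => x _ do under eq_bigr => k _ do rewrite sum_out_gradV.
rewrite exchange_big /=.
under eq_bigr => k _ do rewrite -mulr_sumr sumrB
  (expect_bilinear mu_sum1 _ _ (fun n => V i n) (fun n => (n == j)%:R))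
  (expect_bilinear mu_sum1 _ _ (fun n => P i n) (fun n => (n == j)%:R))
  !cov_delta !(mean_row_fixed _ V_mu) !(mean_row_fixed _ P_mu) A_sum1 Q_sum1.
rewrite !ipmuE !mul_mx_diag !mxE big_ord1 !mxE.
set a := \sum_k mu k 0 * \sum_t A t k * A t k.
set b := \sum_k mu k 0 * \sum_t Q t k * A t k.
transitivity (a * (mu j 0 * V i j - mu i 0 * mu j 0)
              - b * (mu j 0 * P i j - mu i 0 * mu j 0)); last by ring.
by rewrite /a /b !mulr_suml -sumrB; apply: eq_bigr => k _; ring.
Qed.

Lemma expected_gradA (c : 'I_N) :
  Expect mu P Q (fun x k o => gradA V A c x k o)
    = (mu c 0 * (ipmu mu V V - sqnorm mu)) *: col c A
      + (mu c 0 * sqnorm mu) *: const_mx 1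
      - (mu c 0 * ipmu mu V P) *: col c Q
      - (mu c 0 * sqnorm mu) *: (const_mx 1 - col c Q).
Proof.
apply/matrixP => t z; rewrite [z]ord1 ExpectE.
under eq_bigr => x _ do under eq_bigr => k _ do rewrite sum_out_gradA.
rewrite exchange_big /=.
under eq_bigr => k _ do rewrite -mulr_suml.
rewrite sum_mul_delta -mulr_sumr sumrB.
under [X in _ * (X - _)]eq_bigr => x _ do rewrite mulr_sumr.
rewrite [X in _ * (X - _)]exchange_big [X in _ * (_ - X)]exchange_big /=.
under eq_bigr => n _ do rewrite (expect_sum_mul mu_sum1 _ (fun m => V n m) (fun m => V n m)).
under [X in _ * (_ - X)]eq_bigr => o _ do
  rewrite (expect_sum_mul mu_sum1 _ (fun m => P o m) (fun m => V o m)).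
rewrite A_sum1 Q_sum1.
under eq_bigr => n _ do rewrite (mean_row_fixed _ V_mu) mul1r.
under [X in _ - X]eq_bigr => o _ do
  rewrite (mean_row_fixed _ P_mu) (mean_row_fixed _ V_mu) mul1r.
rewrite !big_split /= -!mulr_sumr (sum_cov_rows V_mu V_mu) (sum_cov_rows P_mu V_mu).
have -> : \sum_n mu n 0 * mu n 0 = sqnorm mu.
  by apply: eq_bigr => n _; rewrite expr2.
by rewrite (ipmuC _ P) !mxE; ring.
Qed.

End ExpectedGradients.

Theorem lemmaB7 (R : realType) (N T : nat)
  (P : 'M[R]_N) (mu : 'cV[R]_N) (Q : 'M[R]_(T, N))
  (V : 'M[R]_N) (A : 'M[R]_(T, N))
  (HP0 : forall i j, 0 <= P i j)
  (HP1 : forall j, \sum_(i < N) P i j = 1)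
  (Hmu0 : forall i, 0 <= mu i 0)
  (Hmu1 : \sum_(i < N) mu i 0 = 1)
  (HPmu : P *m mu = mu)
  (HQ0 : forall t k, 0 <= Q t k)
  (HQ1 : forall k, \sum_(t < T) Q t k = 1)
  (HVmu : V *m mu = mu)
  (HA1 : forall k, \sum_(t < T) A t k = 1) :
  Expect mu P Q (fun x k o => gradV V A x k o)
    = ipmu mu A A *: (V *m diag_mx mu^T)
      + (1 - ipmu mu A A) *: (mu *m mu^T)
      - ipmu mu Q A *: (P *m diag_mx mu^T)
      - (1 - ipmu mu Q A) *: (mu *m mu^T)
  /\
  (forall c : 'I_N,
    Expect mu P Q (fun x k o => gradA V A c x k o)
      = (mu c 0 * (ipmu mu V V - sqnorm mu)) *: col c A
        + (mu c 0 * sqnorm mu) *: const_mx 1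
        - (mu c 0 * ipmu mu V P) *: col c Q
        - (mu c 0 * sqnorm mu) *: (const_mx 1 - col c Q)).
Proof.
split; first exact: (expected_gradV HP1 Hmu1 HPmu HQ1 HVmu HA1).
by move=> c; apply: (expected_gradA HP1 Hmu1 HPmu HQ1 HVmu HA1).
Qed.
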